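(* Let $m \in \mathbb N$ and let $\phi \colon \mathcal H_2^0 \to \mathcal H_m$ be a map. Then the following are equivalent: (i) $\phi$ is linear and $\phi(\mathcal{IH}_2^0) \subset \mathcal H_m \cap \mathcal U_m$; (ii) there exist $p, q \in \mathbb N \cup \{0\}$ and $U \in \mathcal U_m$ such that $m = 2(p+q)$ and $\phi(A) = U\left((A \otimes I_p) \oplus (-A \otimes I_q)\right)U^\ast$ for all $A \in \mathcal H_2^0$.
   Context: $\mathcal H_m$ is the real vector space of $m\times m$ complex hermitian matrices, $\mathcal U_m$ the set of $m \times m$ unitary matrices, $\mathcal H_2^0$ the trace-zero matrices in $\mathcal H_2$, $\mathcal{IH}_2^0 = \mathcal H_2^0 \cap \mathcal U_2$, $\otimes$ the Kronecker product and $\oplus$ the block-diagonal direct sum (with $0\times0$ blocks omitted). *)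

From HB Require Import structures.
From mathcomp Require Import all_boot all_order all_algebra.
From mathcomp Require Import complex mxtens.
From mathcomp Require Import Rstruct.
From mathcomp Require Import spectral.

Set Implicit Arguments.
Unset Strict Implicit.
Unset Printing Implicit Defensive.

Import Order.TTheory GRing.Theory Num.Theory.
Local Open Scope ring_scope.
Local Open Scope complex_scope.
Local Open Scope sesquilinear_scope.

Definition C : numClosedFieldType := (Rdefinitions.R)[i].

Definition adjmx (m n : nat) (A : 'M[C]_(m, n)) : 'M[C]_(n, m) := A ^t*.

Definition herm_mx (m : nat) (A : 'M[C]_m) : Prop := adjmx A = A.

Definition unitary_mx (m : nat) (U : 'M[C]_m) : Prop := U \is unitarymx.

Definition herm0 (A : 'M[C]_2) : Prop := herm_mx A /\ \tr A = 0.

Definition iherm0 (A : 'M[C]_2) : Prop := herm0 A /\ unitary_mx A.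

Definition rC (a : Rdefinitions.R) : C := (a%:C)%C.

(* Kronecker product (mathcomp-real-closed's tensmx: index (i,k) |-> i*p+k) *)
Definition kron (m n p q : nat) (A : 'M[C]_(m, n)) (B : 'M[C]_(p, q))
  : 'M[C]_(m * p, n * q) := tensmx A B.

Definition pq_block (p q : nat) (A : 'M[C]_2) : 'M[C]_(2 * p + 2 * q) :=
  block_mx (kron A (1%:M : 'M[C]_p)) 0 0 (kron (- A) (1%:M : 'M[C]_q)).

Definition real_linear_on_herm0 (m : nat) (phi : 'M[C]_2 -> 'M[C]_m) : Prop :=
  forall (a b : Rdefinitions.R) (A B : 'M[C]_2), herm0 A -> herm0 B ->
    phi (rC a *: A + rC b *: B) = rC a *: phi A + rC b *: phi B.

(* Write X, Y, Z for the images under phi of the Pauli matrices, a real basis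
   of H_2^0.  They are hermitian involutions, and they anticommute pairwise
   because phi((3 sigma_x + 4 sigma_y) / 5) is an involution as well.  Then
   W = -i X Y Z is a hermitian involution commuting with X and Z, and
   Y = i W X Z.  If the rows of E form an orthonormal basis of the joint +1
   eigenspace of W and Z, the rows of [E; E X] carry X, Y, Z to sigma (x) I.
   The same construction for (-X, -Y, -Z) handles the -1 eigenspace of W,
   where phi acts as A |-> -A (x) I, and stacking both frames gives U. *)

From HB Require Import structures.
From mathcomp Require Import all_boot all_order all_algebra.
From mathcomp Require Import complex mxtens Rstruct spectral.
From mathcomp Require Import ring.

Set Implicit Arguments.
Unset Strict Implicit.
Unset Printing Implicit Defensive.

Import GRing.Theory Num.Theory.
Local Open Scope ring_scope.

Lemma adjmxK m n (A : 'M[C]_(m, n)) : adjmx (adjmx A) = A.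
Proof. exact: trmxCK. Qed.

Lemma adjmxM m n p (A : 'M[C]_(m, n)) (B : 'M[C]_(n, p)) :
  adjmx (A *m B) = adjmx B *m adjmx A.
Proof. by rewrite /adjmx trmx_mul map_mxM. Qed.

Lemma adjmxD m n (A B : 'M[C]_(m, n)) : adjmx (A + B) = adjmx A + adjmx B.
Proof. by apply/matrixP => i j; rewrite !mxE rmorphD. Qed.

Lemma adjmxN m n (A : 'M[C]_(m, n)) : adjmx (- A) = - adjmx A.
Proof. by apply/matrixP => i j; rewrite !mxE rmorphN. Qed.

Lemma adjmxZ m n a (A : 'M[C]_(m, n)) : adjmx (a *: A) = a^* *: adjmx A.
Proof. by apply/matrixP => i j; rewrite !mxE rmorphM. Qed.

Lemma adjmx0 m n : adjmx (0 : 'M[C]_(m, n)) = 0.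
Proof. by apply/matrixP => i j; rewrite !mxE rmorph0. Qed.

Lemma adjmx1 m : adjmx (1%:M : 'M[C]_m) = 1%:M.
Proof. by apply/matrixP => i j; rewrite !mxE rmorphMn rmorph1 eq_sym. Qed.

Lemma adjmx_col m1 m2 n (A : 'M[C]_(m1, n)) (B : 'M[C]_(m2, n)) :
  adjmx (col_mx A B) = row_mx (adjmx A) (adjmx B).
Proof. by rewrite /adjmx tr_col_mx map_row_mx. Qed.

Lemma unitary_mxP m (U : 'M[C]_m) : unitary_mx U <-> U *m adjmx U = 1%:M.
Proof. by split => /unitarymxP. Qed.

Lemma herm_unitaryE m (S : 'M[C]_m) :
  herm_mx S -> unitary_mx S <-> S *m S = 1%:M.
Proof. by rewrite unitary_mxP => ->. Qed.

Lemma conj_rC a : (rC a)^* = rC a.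
Proof. by apply/conj_Creal/complex_realP; exists a. Qed.

Lemma Creal_rC (z : C) : z \is Num.real -> exists a, z = rC a.
Proof. by move=> /complex_realP. Qed.

Lemma rC1 : rC 1 = 1.
Proof. by rewrite /rC rmorph1. Qed.

Lemma rC_eq0 a : (rC a == 0) = (a == 0).
Proof. by apply/eqP/eqP => [/complexI | ->]. Qed.

Definition mx2 (a b c d : C) : 'M[C]_2 :=
  \matrix_(i, j) if val i == 0%N then (if val j == 0%N then a else b)
                 else (if val j == 0%N then c else d).

Definition pauli_x := mx2 0 1 1 0.
Definition pauli_y := mx2 0 (- 'i) 'i 0.
Definition pauli_z := mx2 1 0 0 (-1).

Lemma ord2_cases (i : 'I_2) : i = 0 \/ i = 1.
Proof. by case: i => [[|[|]]] // lt_i2; [left | right]; apply: val_inj. Qed.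

Lemma mulCii : 'i * 'i = -1 :> C.
Proof. by rewrite -expr2 sqrCi. Qed.

Record pauli_triple m (X Y Z : 'M[C]_m) : Prop := PauliTriple {
  pauli_hermX : herm_mx X;
  pauli_hermY : herm_mx Y;
  pauli_hermZ : herm_mx Z;
  pauli_sqrX : X *m X = 1%:M;
  pauli_sqrY : Y *m Y = 1%:M;
  pauli_sqrZ : Z *m Z = 1%:M;
  pauli_antiXY : X *m Y = - (Y *m X);
  pauli_antiXZ : X *m Z = - (Z *m X);
  pauli_antiYZ : Y *m Z = - (Z *m Y)
}.

Lemma pauli_matrices : pauli_triple pauli_x pauli_y pauli_z.
Proof.
split; apply/matrixP => i j; rewrite !mxE ?big_ord_recl ?big_ord0 ?mxE;
  case: (ord2_cases i) => ->; case: (ord2_cases j) => -> /=;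
  by rewrite ?rmorphN /= ?(conjC0, conjC1, conjCi, opprK, oppr0, mulCii,
    mulr0, mul0r, mulr1, mul1r, mulrN, mulNr, addr0, add0r).
Qed.

Lemma mxtrace2 (A : 'M[C]_2) : \tr A = A 0 0 + A 1 1.
Proof.
rewrite /mxtrace !big_ord_recl big_ord0 addr0.
by congr (_ + A _ _); apply: val_inj.
Qed.

Lemma iherm0_involution (A : 'M[C]_2) :
  herm_mx A -> \tr A = 0 -> A *m A = 1%:M -> iherm0 A.
Proof. by move=> hA trA AA; split; [split | apply/herm_unitaryE]. Qed.

Lemma iherm0_pauli : [/\ iherm0 pauli_x, iherm0 pauli_y & iherm0 pauli_z].
Proof.
have [hX hY hZ XX YY ZZ _ _ _] := pauli_matrices.
by split; apply: iherm0_involution; rewrite // mxtrace2 !mxE /= ?addr0 ?subrr.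
Qed.

Lemma herm0_pauli_decomp A : herm0 A ->
  exists a b c, A = rC a *: pauli_x + rC b *: pauli_y + rC c *: pauli_z.
Proof.
case=> hA trA.
have adjA i j : (A j i)^* = A i j by move/matrixP: hA => /(_ i j); rewrite !mxE.
have A11 : A 1 1 = - A 0 0 by apply/eqP; rewrite -addr_eq0 addrC -mxtrace2 trA.
have [c ec] : exists c, A 0 0 = rC c by apply/Creal_rC/CrealP; exact: adjA.
have [a ea] := Creal_rC (Creal_Re (A 1 0)).
have [b eb] := Creal_rC (Creal_Im (A 1 0)).
have A10 : A 1 0 = rC a + 'i * rC b by rewrite -ea -eb -Crect.
exists a, b, c; apply/matrixP => i j; rewrite !mxE.
case: (ord2_cases i) => ->; case: (ord2_cases j) => -> /=.
- by rewrite ec; ring.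
- by rewrite -adjA A10 rmorphD rmorphM /= conjCi !conj_rC; ring.
- by rewrite A10; ring.
- by rewrite A11 ec; ring.
Qed.

Lemma herm0_lincomb a b A B :
  herm0 A -> herm0 B -> herm0 (rC a *: A + rC b *: B).
Proof.
case=> hA trA [hB trB]; split.
  by rewrite /herm_mx adjmxD !adjmxZ !conj_rC hA hB.
by rewrite mxtraceD !mxtraceZ trA trB !mulr0 addr0.
Qed.

Lemma sqr_lincomb n (S T : 'M[C]_n) a b :
  (a *: S + b *: T) *m (a *: S + b *: T) =
  (a * a) *: (S *m S) + (a * b) *: (S *m T + T *m S) + (b * b) *: (T *m T).
Proof.
rewrite !mulmxDl !mulmxDr -!scalemxAl -!scalemxAr !scalerA scalerDr.
by rewrite [b * a]mulrC -!addrA.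
Qed.

Lemma iherm0_lincomb a b S T : a * a + b * b = 1 ->
  iherm0 S -> iherm0 T -> S *m T = - (T *m S) -> iherm0 (rC a *: S + rC b *: T).
Proof.
move=> ab [hS uS] [hT uT] ST; have hST := herm0_lincomb a b hS hT.
split; first exact: hST.
apply/(herm_unitaryE hST.1).
rewrite sqr_lincomb ST addNr scaler0 addr0.
rewrite (herm_unitaryE hS.1).1 // (herm_unitaryE hT.1).1 //.
by rewrite -scalerDl -!rmorphM -rmorphD /= ab scale1r.
Qed.

Section InvolutionPreserver.
Variables (m : nat) (phi : 'M[C]_2 -> 'M[C]_m).
Hypothesis phi_lin : real_linear_on_herm0 phi.
Hypothesis phi_iherm0 :
  forall A, iherm0 A -> herm_mx (phi A) /\ unitary_mx (phi A).

Lemma phi_sqr A : iherm0 A -> phi A *m phi A = 1%:M.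
Proof. by move=> /phi_iherm0[hA uA]; apply/herm_unitaryE. Qed.

Lemma phi_anticomm S T : iherm0 S -> iherm0 T ->
  S *m T = - (T *m S) -> phi S *m phi T = - (phi T *m phi S).
Proof.
move=> iS iT ST; have [[hS _] [hT _]] := (iS, iT).
pose a : Rdefinitions.R := 3 / 5; pose b : Rdefinitions.R := 4 / 5.
have ab : a * a + b * b = 1 by rewrite /a /b; field.
have ab_neq0 : a * b != 0 by rewrite !mulf_neq0 ?invr_eq0 ?pnatr_eq0.
have := phi_sqr (iherm0_lincomb ab iS iT ST).
rewrite (phi_lin a b hS hT) sqr_lincomb !phi_sqr // addrAC -scalerDl.
rewrite -!rmorphM -rmorphD /= ab scale1r -{2}[1%:M]addr0 => /addrI/eqP.
by rewrite scaler_eq0 rC_eq0 (negbTE ab_neq0) addr_eq0 => /eqP.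
Qed.

Lemma phi_pauli : pauli_triple (phi pauli_x) (phi pauli_y) (phi pauli_z).
Proof.
have [ix iy iz] := iherm0_pauli; have [_ _ _ _ _ _ xy xz yz] := pauli_matrices.
by split; apply: phi_sqr || apply: phi_anticomm || apply: (phi_iherm0 _).1.
Qed.

Lemma phi_pauli_lincomb a b c :
  phi (rC a *: pauli_x + rC b *: pauli_y + rC c *: pauli_z) =
  rC a *: phi pauli_x + rC b *: phi pauli_y + rC c *: phi pauli_z.
Proof.
have [[hx _] [hy _] [hz _]] := iherm0_pauli.
have := phi_lin 1 c (herm0_lincomb a b hx hy) hz.
by rewrite rC1 !scale1r => ->; rewrite (phi_lin a b hx hy).
Qed.

End InvolutionPreserver.

Lemma mulmx_anticomm m k (A B : 'M[C]_m) (P : 'M[C]_(k, m)) :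
  A *m B = - (B *m A) -> P *m B *m A = - (P *m A *m B).
Proof. by move=> AB; rewrite -!mulmxA AB mulmxN opprK. Qed.

Lemma mulmx_involK m k (A : 'M[C]_m) (P : 'M[C]_(k, m)) :
  A *m A = 1%:M -> P *m A *m A = P.
Proof. by move=> AA; rewrite -mulmxA AA mulmx1. Qed.

Section JointProjection.
Variables (m : nat) (A B : 'M[C]_m).
Hypotheses (hermA : herm_mx A) (hermB : herm_mx B).
Hypotheses (sqrA : A *m A = 1%:M) (sqrB : B *m B = 1%:M) (AB : A *m B = B *m A).

Definition joint_proj := 4%:R^-1 *: ((1%:M + A) *m (1%:M + B)).

Lemma joint_projA : joint_proj *m A = joint_proj.
Proof.
have BA1 : (1%:M + B) *m A = A *m (1%:M + B).
  by rewrite mulmxDl mulmxDr mul1mx mulmx1 AB.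
by rewrite -scalemxAl -mulmxA BA1 mulmxA mulmxDl sqrA mul1mx addrC.
Qed.

Lemma joint_projB : joint_proj *m B = joint_proj.
Proof.
by rewrite -scalemxAl -mulmxA [_ *m B]mulmxDl sqrB mul1mx [B + _]addrC.
Qed.

Lemma joint_proj_herm : herm_mx joint_proj.
Proof.
rewrite /herm_mx /joint_proj adjmxZ adjmxM !adjmxD adjmx1 hermA hermB.
rewrite fmorphV rmorph_nat.
by congr (_ *: _); rewrite !mulmxDl !mulmxDr !mul1mx !mulmx1 AB addrACA.
Qed.

Lemma joint_proj_idem : joint_proj *m joint_proj = joint_proj.
Proof.
have PA : joint_proj *m (1%:M + A) = 2%:R *: joint_proj.
  by rewrite mulmxDr mulmx1 joint_projA scaler_nat mulr2n.
have PB : joint_proj *m (1%:M + B) = 2%:R *: joint_proj.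
  by rewrite mulmxDr mulmx1 joint_projB scaler_nat mulr2n.
rewrite {2}/joint_proj -scalemxAr mulmxA PA -scalemxAl PB 2!scalerA.
by rewrite -mulrA -natrM mulVf ?pnatr_eq0 // scale1r.
Qed.

End JointProjection.

Lemma joint_proj_addN m (A B : 'M[C]_m) :
  joint_proj A B + joint_proj A (- B) = 2%:R^-1 *: (1%:M + A).
Proof.
rewrite /joint_proj -scalerDr -mulmxDr addrACA subrr addr0 mulmxDr mulmx1.
by rewrite scalerDr -scalerDl; congr (_ *: _); field.
Qed.

Lemma joint_proj_conj m (A B X : 'M[C]_m) : X *m X = 1%:M ->
  X *m A = A *m X -> X *m B = - (B *m X) ->
  X *m joint_proj A B *m X = joint_proj A (- B).
Proof.
move=> XX XA XB; rewrite /joint_proj -scalemxAr -scalemxAl; congr (_ *: _).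
have X1A : X *m (1%:M + A) = (1%:M + A) *m X.
  by rewrite mulmxDl mulmxDr mul1mx mulmx1 XA.
rewrite mulmxA X1A -!mulmxA; congr (_ *m _).
by rewrite mulmxDl mul1mx mulmxDr XX mulmxA XB mulNmx -mulmxA XX mulmx1.
Qed.

Lemma proj_gram_factor m (P : 'M[C]_m) : herm_mx P -> P *m P = P ->
  exists E : 'M[C]_(\rank P, m), E *m adjmx E = 1%:M /\ adjmx E *m E = P.
Proof.
move=> hP PP; pose E := schmidt (row_base P).
have /unitarymxP orthE : E \is unitarymx.
  exact/schmidt_unitarymx/rank_leq_col.
have eqEP : (E :=: P)%MS.
  exact: eqmx_trans (eqmx_schmidt_free (row_base_free P)) (eq_row_base P).
have [K EKP] : exists K, E = K *m P by apply/submxP; rewrite eqEP.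
have [L PLE] : exists L, P = L *m E by apply/submxP; rewrite eqEP.
have EP : E *m P = E by rewrite EKP -mulmxA PP.
have PE : P *m adjmx E = adjmx E.
  by move: (congr1 (@adjmx _ _) EP); rewrite adjmxM hP.
have EL : adjmx E = L.
  by move: (congr1 (mulmx^~ (adjmx E)) PLE); rewrite PE -mulmxA orthE mulmx1.
by exists E; split; rewrite // EL; exact: esym.
Qed.

Lemma orthonormal_fixed n m (G : 'M[C]_(n, m)) (S : 'M[C]_m) :
  G *m adjmx G = 1%:M -> adjmx G *m G *m S = adjmx G *m G -> G *m S = G.
Proof.
move=> GG PS; rewrite -{1}[G]mul1mx -GG -(mulmxA G (adjmx G) G) -mulmxA PS.
by rewrite mulmxA GG mul1mx.
Qed.

Lemma oppmx_self_eq0 m n (A : 'M[C]_(m, n)) : A = - A -> A = 0.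
Proof.
move=> h; apply/eqP; have : (2%:R : C) *: A == 0.
  by rewrite scaler_nat mulr2n {1}h addNr.
by rewrite scaler_eq0 pnatr_eq0.
Qed.

Lemma eigen_orthogonal m n1 n2 (S : 'M[C]_m)
    (E : 'M[C]_(n1, m)) (F : 'M[C]_(n2, m)) :
  herm_mx S -> E *m S = E -> F *m S = - F ->
  E *m adjmx F = 0 /\ F *m adjmx E = 0.
Proof.
move=> hS ES FS; have EF0 : E *m adjmx F = 0.
  apply: oppmx_self_eq0.
  by rewrite -{1}ES -mulmxA -{1}hS -adjmxM FS adjmxN mulmxN.
by split; rewrite // -[F]adjmxK -adjmxM EF0 adjmx0.
Qed.

Definition pauli_W m (X Y Z : 'M[C]_m) : 'M[C]_m := - 'i *: (X *m Y *m Z).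

Definition tens1_block n (A : 'M[C]_2) : 'M[C]_(n + n) :=
  block_mx (A 0 0)%:M (A 0 1)%:M (A 1 0)%:M (A 1 1)%:M.

Lemma tens1_block_mul_col n k (A : 'M[C]_2) (E F : 'M[C]_(n, k)) :
  tens1_block n A *m col_mx E F =
  col_mx (A 0 0 *: E + A 0 1 *: F) (A 1 0 *: E + A 1 1 *: F).
Proof. by rewrite mul_block_col !mul_scalar_mx. Qed.

Lemma tens1_blockN n (A : 'M[C]_2) : tens1_block n (- A) = - tens1_block n A.
Proof. by rewrite /tens1_block opp_block_mx !mxE !raddfN. Qed.

Section PauliFrame.
Variables (m : nat) (X Y Z : 'M[C]_m).
Hypothesis pXYZ : pauli_triple X Y Z.
Local Notation W := (pauli_W X Y Z).

Let hX := pauli_hermX pXYZ.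
Let hY := pauli_hermY pXYZ.
Let hZ := pauli_hermZ pXYZ.
Let XX := pauli_sqrX pXYZ.
Let YY := pauli_sqrY pXYZ.
Let ZZ := pauli_sqrZ pXYZ.
Let XXK k (P : 'M[C]_(k, m)) := mulmx_involK P XX.
Let ZZK k (P : 'M[C]_(k, m)) := mulmx_involK P ZZ.
Let YX k (P : 'M[C]_(k, m)) := mulmx_anticomm P (pauli_antiXY pXYZ).
Let ZX k (P : 'M[C]_(k, m)) := mulmx_anticomm P (pauli_antiXZ pXYZ).
Let ZY k (P : 'M[C]_(k, m)) := mulmx_anticomm P (pauli_antiYZ pXYZ).
Let ZX1 : Z *m X = - (X *m Z). Proof. by rewrite (pauli_antiXZ pXYZ) opprK. Qed.

Lemma pauli_W_herm : herm_mx W.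
Proof.
rewrite /herm_mx /pauli_W adjmxZ !adjmxM hX hY hZ rmorphN /= conjCi mulmxA.
by rewrite YX ZX1 !mulNmx ZY !opprK scalerN scaleNr.
Qed.

Lemma pauli_W_sqr : W *m W = 1%:M.
Proof.
rewrite -scalemxAl -scalemxAr scalerA !mulmxA ZX !mulNmx YX !mulNmx opprK XX.
by rewrite mul1mx ZY !mulNmx YY mul1mx ZZ mulrNN mulCii scaleN1r opprK.
Qed.

Lemma pauli_WX : W *m X = X *m W.
Proof. by rewrite -scalemxAl -scalemxAr !mulmxA ZX YX !mulNmx opprK. Qed.

Lemma pauli_WZ : W *m Z = Z *m W.
Proof.
by rewrite -scalemxAl -scalemxAr !mulmxA ZX1 !mulNmx ZY !mulNmx opprK.
Qed.

Lemma pauli_Y_WXZ : Y = 'i *: (W *m X *m Z).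
Proof.
rewrite -!scalemxAl scalerA ZX mulNmx ZZK YX opprK XX mul1mx.
by rewrite mulrN mulCii opprK scale1r.
Qed.

Variables (n : nat) (E : 'M[C]_(n, m)).
Hypothesis orthE : E *m adjmx E = 1%:M.
Hypothesis gramE : adjmx E *m E = joint_proj W Z.

Let EW : E *m W = E.
Proof.
apply: (orthonormal_fixed orthE).
by rewrite gramE (joint_projA pauli_W_sqr pauli_WZ).
Qed.
Let EZ : E *m Z = E.
Proof.
by apply: (orthonormal_fixed orthE); rewrite gramE (joint_projB W ZZ).
Qed.
Let EXZ : E *m X *m Z = - (E *m X).
Proof. by rewrite -[LHS]opprK -ZX EZ. Qed.

Definition pauli_frame : 'M[C]_(n + n, m) := col_mx E (E *m X).

Lemma pauli_frame_orthonormal : pauli_frame *m adjmx pauli_frame = 1%:M.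
Proof.
have [EX0 XE0] := eigen_orthogonal hZ EZ EXZ.
rewrite adjmx_col mul_col_row orthE EX0 XE0 adjmxM hX mulmxA XXK orthE.
by rewrite -scalar_mx_block.
Qed.

Lemma pauli_frame_gram :
  adjmx pauli_frame *m pauli_frame = 2%:R^-1 *: (1%:M + W).
Proof.
rewrite adjmx_col mul_row_col gramE adjmxM hX mulmxA -(mulmxA X) gramE.
rewrite (joint_proj_conj XX (esym pauli_WX) (pauli_antiXZ pXYZ)).
exact: joint_proj_addN.
Qed.

Lemma pauli_frameX : pauli_frame *m X = tens1_block n pauli_x *m pauli_frame.
Proof.
rewrite mul_col_mx tens1_block_mul_col !mxE /= XXK.
by rewrite !scale0r !scale1r add0r addr0.
Qed.

Lemma pauli_frameY : pauli_frame *m Y = tens1_block n pauli_y *m pauli_frame.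
Proof.
rewrite mul_col_mx tens1_block_mul_col !mxE /= pauli_Y_WXZ -!scalemxAr !mulmxA.
rewrite EW EXZ -(mulmxA E X W) -pauli_WX mulmxA EW XXK EZ.
by rewrite !scale0r add0r addr0 scalerN scaleNr.
Qed.

Lemma pauli_frameZ : pauli_frame *m Z = tens1_block n pauli_z *m pauli_frame.
Proof.
rewrite mul_col_mx tens1_block_mul_col !mxE /= EZ EXZ.
by rewrite !scale0r !scale1r add0r addr0 scaleN1r.
Qed.

End PauliFrame.

Lemma pauli_half_frame m (X Y Z : 'M[C]_m) : pauli_triple X Y Z ->
  exists n (G : 'M[C]_(n + n, m)),
  [/\ G *m adjmx G = 1%:M, adjmx G *m G = 2%:R^-1 *: (1%:M + pauli_W X Y Z),
      G *m X = tens1_block n pauli_x *m G,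
      G *m Y = tens1_block n pauli_y *m G &
      G *m Z = tens1_block n pauli_z *m G].
Proof.
move=> pXYZ; have WZ := pauli_WZ pXYZ.
have [E [orthE gramE]] := proj_gram_factor
  (joint_proj_herm (pauli_W_herm pXYZ) (pauli_hermZ pXYZ) WZ)
  (joint_proj_idem (pauli_W_sqr pXYZ) (pauli_sqrZ pXYZ) WZ).
exists _, (pauli_frame X E); split.
- exact (pauli_frame_orthonormal pXYZ orthE gramE).
- exact (pauli_frame_gram pXYZ gramE).
- exact (pauli_frameX pXYZ E).
- exact (pauli_frameY pXYZ orthE gramE).
- exact (pauli_frameZ pXYZ orthE gramE).
Qed.

Lemma pauli_tripleN m (X Y Z : 'M[C]_m) :
  pauli_triple X Y Z -> pauli_triple (- X) (- Y) (- Z).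
Proof.
case=> hX hY hZ XX YY ZZ XY XZ YZ.
by split; rewrite /herm_mx ?adjmxN ?mulNmx ?mulmxN ?opprK // ?hX ?hY ?hZ.
Qed.

Lemma pauli_WN m (X Y Z : 'M[C]_m) :
  pauli_W (- X) (- Y) (- Z) = - pauli_W X Y Z.
Proof. by rewrite /pauli_W !(mulNmx, mulmxN, opprK) scalerN. Qed.

Definition pq_block_split p q (A : 'M[C]_2) : 'M[C]_(p + p + (q + q)) :=
  block_mx (tens1_block p A) 0 0 (tens1_block q (- A)).

Lemma col_mx_intertwine p q m (G1 : 'M[C]_(p + p, m)) (G2 : 'M[C]_(q + q, m))
    (S : 'M[C]_m) (A : 'M[C]_2) :
  G1 *m S = tens1_block p A *m G1 -> G2 *m - S = tens1_block q A *m G2 ->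
  col_mx G1 G2 *m S = pq_block_split p q A *m col_mx G1 G2.
Proof.
move=> G1S G2S; rewrite mul_col_mx mul_block_col !mul0mx addr0 add0r G1S.
by rewrite tens1_blockN mulNmx -G2S mulmxN opprK.
Qed.

Lemma pauli_block_rep m (X Y Z : 'M[C]_m) : pauli_triple X Y Z ->
  exists p q (V : 'M[C]_(p + p + (q + q), m)),
  [/\ V *m adjmx V = 1%:M, adjmx V *m V = 1%:M,
      V *m X = pq_block_split p q pauli_x *m V,
      V *m Y = pq_block_split p q pauli_y *m V &
      V *m Z = pq_block_split p q pauli_z *m V].
Proof.
move=> pXYZ; have [p [G1 [orth1 gram1 G1X G1Y G1Z]]] := pauli_half_frame pXYZ.
have [q [G2 [orth2 gram2 G2X G2Y G2Z]]] :=
  pauli_half_frame (pauli_tripleN pXYZ).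
rewrite pauli_WN in gram2.
have half_fix S : S *m S = 1%:M ->
    2%:R^-1 *: (1%:M + S) *m S = 2%:R^-1 *: (1%:M + S).
  by move=> SS; rewrite -scalemxAl mulmxDl mul1mx SS addrC.
have WW := pauli_W_sqr pXYZ.
have WNsqr : (- pauli_W X Y Z) *m (- pauli_W X Y Z) = 1%:M.
  by rewrite mulNmx mulmxN opprK.
have G1W : G1 *m pauli_W X Y Z = G1.
  by apply: (orthonormal_fixed orth1); rewrite gram1; exact: half_fix.
have G2W : G2 *m pauli_W X Y Z = - G2.
  apply: oppr_inj; rewrite opprK -mulmxN.
  by apply: (orthonormal_fixed orth2); rewrite gram2; exact: half_fix.
have [G12 G21] := eigen_orthogonal (pauli_W_herm pXYZ) G1W G2W.
have half2 : 2%:R^-1 + 2%:R^-1 = 1 :> C by field.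
exists p, q, (col_mx G1 G2); split.
- by rewrite adjmx_col mul_col_row orth1 orth2 G12 G21 -scalar_mx_block.
- rewrite adjmx_col mul_row_col gram1 gram2 -scalerDr addrACA subrr addr0.
  by rewrite scalerDr -scalerDl half2 scale1r.
- exact: col_mx_intertwine G1X G2X.
- exact: col_mx_intertwine G1Y G2Y.
- exact: col_mx_intertwine G1Z G2Z.
Qed.

Lemma kron1_tens1_block n (A : 'M[C]_2) (e : (n + n = 2 * n)%N) :
  kron A (1%:M : 'M[C]_n) = castmx (e, e) (tens1_block n A).
Proof.
apply/matrixP => r s; rewrite castmxE.
case: (mxtens_indexP r) => i k; case: (mxtens_indexP s) => j l.
have lo (k' : 'I_n) :
    cast_ord (esym e) (mxtens_index (0 : 'I_2, k')) = lshift n k'.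
  by apply: val_inj => /=; rewrite mul0n add0n.
have hi (k' : 'I_n) :
    cast_ord (esym e) (mxtens_index (1 : 'I_2, k')) = rshift n k'.
  by apply: val_inj => /=; rewrite mul1n.
rewrite /kron tensmxE.
by case: (ord2_cases i) => ->; case: (ord2_cases j) => ->;
  rewrite ?lo ?hi ?block_mxEul ?block_mxEur ?block_mxEdl ?block_mxEdr !mxE
          mulr_natr.
Qed.

Lemma pq_block_splitE p q (A : 'M[C]_2)
    (e : (p + p + (q + q) = 2 * p + 2 * q)%N) :
  pq_block p q A = castmx (e, e) (pq_block_split p q A).
Proof.
have ep : (p + p = 2 * p)%N by rewrite mul2n addnn.
have eq : (q + q = 2 * q)%N by rewrite mul2n addnn.
rewrite (castmx_block ep ep eq eq e e) /pq_block (kron1_tens1_block _ ep).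
rewrite (kron1_tens1_block _ eq); congr block_mx;
  by apply/matrixP => i j; rewrite castmxE !mxE.
Qed.

Lemma square_unitary_dim n m (V : 'M[C]_(n, m)) :
  V *m adjmx V = 1%:M -> adjmx V *m V = 1%:M -> n = m.
Proof.
move=> VV VtV; have uV : V \is unitarymx by apply/unitarymxP.
have uVt : adjmx V \is unitarymx.
  by apply/unitarymxP; rewrite -[X in _ *m X]/(adjmx (adjmx V)) adjmxK.
move: (mxrank_unitary uVt).
by rewrite /adjmx mxrank_map mxrank_tr mxrank_unitary.
Qed.

Lemma unitary_conj_cast n m (h : n = m) (V : 'M[C]_(n, m)) :
  adjmx V *m V = 1%:M -> exists U : 'M[C]_m, unitary_mx U /\
    forall B : 'M[C]_n, U *m castmx (h, h) B *m adjmx U = adjmx V *m B *m V.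
Proof.
case: m / h in V * => VtV; exists (adjmx V); rewrite adjmxK.
by split=> [|B]; [apply/unitary_mxP; rewrite adjmxK | rewrite castmx_id].
Qed.

Definition pq_rep p q m (e : (2 * p + 2 * q = m)%N) (U : 'M[C]_m)
    (A : 'M[C]_2) :=
  U *m castmx (e, e) (pq_block p q A) *m adjmx U.

Lemma pauli_rep m (X Y Z : 'M[C]_m) : pauli_triple X Y Z ->
  exists p q (e : (2 * p + 2 * q = m)%N) (U : 'M[C]_m),
  [/\ unitary_mx U, X = pq_rep e U pauli_x, Y = pq_rep e U pauli_y
    & Z = pq_rep e U pauli_z].
Proof.
move=> /pauli_block_rep[p [q [V [VV VtV VX VY VZ]]]].
have g : (p + p + (q + q) = 2 * p + 2 * q)%N by rewrite !mul2n !addnn.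
have e : (2 * p + 2 * q = m)%N by rewrite -g (square_unitary_dim VV VtV).
have [U [uU conjU]] := unitary_conj_cast (etrans g e) VtV.
have VSV S A : V *m S = pq_block_split p q A *m V -> S = pq_rep e U A.
  by rewrite /pq_rep (pq_block_splitE _ g) castmx_comp conjU -mulmxA => <-;
    rewrite mulmxA VtV mul1mx.
by exists p, q, e, U; split => //; apply: VSV.
Qed.

Lemma tensmx11 m n : tensmx (1%:M : 'M[C]_m) (1%:M : 'M[C]_n) = 1%:M.
Proof.
apply/matrixP => r s.
case: (mxtens_indexP r) => i k; case: (mxtens_indexP s) => j l.
rewrite tensmxE !mxE (inj_eq (can_inj (@mxtens_indexK _ _))) xpair_eqE.
by rewrite -natrM mulnb.
Qed.

Lemma kronDl m n p q (A B : 'M[C]_(m, n)) (D : 'M[C]_(p, q)) :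
  kron (A + B) D = kron A D + kron B D.
Proof. by apply/matrixP => i j; rewrite /kron !mxE mulrDl. Qed.

Lemma kronZl m n p q a (A : 'M[C]_(m, n)) (D : 'M[C]_(p, q)) :
  kron (a *: A) D = a *: kron A D.
Proof. by apply/matrixP => i j; rewrite /kron !mxE mulrA. Qed.

Lemma pq_blockD p q (A B : 'M[C]_2) :
  pq_block p q (A + B) = pq_block p q A + pq_block p q B.
Proof. by rewrite /pq_block add_block_mx !addr0 opprD !kronDl. Qed.

Lemma pq_blockZ p q a (A : 'M[C]_2) :
  pq_block p q (a *: A) = a *: pq_block p q A.
Proof. by rewrite /pq_block scale_block_mx !scaler0 -scalerN !kronZl. Qed.

Lemma pq_block_sqr p q (A : 'M[C]_2) : A *m A = 1%:M ->
  pq_block p q A *m pq_block p q A = 1%:M.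
Proof.
move=> AA; rewrite /pq_block mulmx_block !mul0mx !mulmx0 !addr0 !add0r.
rewrite !tensmx_mul mulNmx mulmxN opprK AA !mulmx1 !tensmx11.
by rewrite -scalar_mx_block.
Qed.

Lemma pq_repD p q m (e : (2 * p + 2 * q = m)%N) U (A B : 'M[C]_2) :
  pq_rep e U (A + B) = pq_rep e U A + pq_rep e U B.
Proof.
rewrite /pq_rep; case: m / e in U *.
by rewrite !castmx_id pq_blockD mulmxDr mulmxDl.
Qed.

Lemma pq_repZ p q m (e : (2 * p + 2 * q = m)%N) U a (A : 'M[C]_2) :
  pq_rep e U (a *: A) = a *: pq_rep e U A.
Proof.
rewrite /pq_rep; case: m / e in U *.
by rewrite !castmx_id pq_blockZ -scalemxAr -scalemxAl.
Qed.

Lemma pq_rep_sqr p q m (e : (2 * p + 2 * q = m)%N) U (A : 'M[C]_2) :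
  unitary_mx U -> A *m A = 1%:M -> pq_rep e U A *m pq_rep e U A = 1%:M.
Proof.
move=> /unitary_mxP UU AA; have UtU := mulmx1C UU.
rewrite /pq_rep; case: m / e in U UU UtU *; rewrite castmx_id.
rewrite !mulmxA -(mulmxA _ (adjmx U) U) UtU mulmx1 -(mulmxA U).
by rewrite pq_block_sqr // mulmx1.
Qed.

Theorem corollary3p5 (m : nat) (phi : 'M[C]_2 -> 'M[C]_m)
  (phi_maps : forall A : 'M[C]_2, herm0 A -> herm_mx (phi A)) :
  (real_linear_on_herm0 phi /\
     (forall A : 'M[C]_2, iherm0 A -> herm_mx (phi A) /\ unitary_mx (phi A)))
  <->
  (exists (p q : nat) (e : (2 * p + 2 * q = m)%N) (U : 'M[C]_m),
     unitary_mx U /\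
     forall A : 'M[C]_2, herm0 A ->
       phi A = U *m castmx (e, e) (pq_block p q A) *m adjmx U).
Proof.
split.
- case=> lin pres.
  have [p [q [e [U [uU eX eY eZ]]]]] := pauli_rep (phi_pauli lin pres).
  exists p, q, e, U; split=> [// | A /herm0_pauli_decomp[a [b [c ->]]]].
  rewrite (phi_pauli_lincomb lin) eX eY eZ -!pq_repZ -!pq_repD.
  reflexivity.
- case=> p [q [e [U [uU phiE]]]].
  have {}phiE A : herm0 A -> phi A = pq_rep e U A := phiE A.
  split=> [a b A B hA hB | A [hA uA]].
    by rewrite !phiE ?pq_repD ?pq_repZ //; apply: herm0_lincomb.
  split; first exact: phi_maps hA.
  apply/(herm_unitaryE (phi_maps _ hA)); rewrite phiE // pq_rep_sqr //.
  exact: (herm_unitaryE hA.1).1 uA.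
Qed.
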